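(* Let $n>1$ be odd and $D_{2n}=\langle s,t\mid s^2=t^n=1,\ sts=t^{-1}\rangle$. Let $(u_i)_{i\in[1,m]}$ be a system of equations over $D_{2n}$, each $u_i$ a word over the constants $s,t,t^{-1}$ and variables $X_1^{\pm1},\dots,X_k^{\pm1}$. Let $w_i$ be the word obtained from $u_i$ by replacing each $X_j$ by $Y_{0,j}(Y_{1,j}tY_{1,j}^{-1})(Y_{2,j}tY_{2,j}^{-1})\cdots(Y_{n,j}tY_{n,j}^{-1})$ and each $X_j^{-1}$ by the formal inverse of that word, and then replacing $s,t,t^{\pm1}$ by letters $a,d,d^{\pm1}$ and each $Y_{i,j}^{\pm1}$ by $g_{i,j}^{\pm1}$. Let $G_o$ be the group with generators $a,d$ and $g_{i,j}$ ($i\in[0,n]$, $j\in[1,k]$) and relators $a^2$, $d^n$, $adad$, $w_i$ ($i\in[1,m]$), $[g,g']$, $[g,a]$, $g^2$ for all $g,g'\in\{g_{i,j}\}$. Then there is a surjective homomorphism $G_o\to D_{2n}$ if and only if the system $(u_i)_{i\in[1,m]}$ has a solution in $D_{2n}$.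
   Context: A solution of a system of equations over a group is an assignment of group elements $h_j$ to the variables $X_j$ (and $h_j^{-1}$ to $X_j^{-1}$) under which every equation evaluates to the identity. $[x,y]=xyx^{-1}y^{-1}$. *)

From mathcomp Require Import all_boot all_fingroup all_solvable.
From Stdlib Require List.
Set Implicit Arguments. Unset Strict Implicit. Unset Printing Implicit Defensive.
Import GroupScope.
Local Open Scope group_scope.

(* A (free-group) word over an alphabet L is a list of letters with signs:
   (x, false) stands for x, (x, true) for x^-1. *)
Definition word (L : Type) := seq (L * bool).

Definition eval_word (L : Type) (gT : finGroupType) (f : L -> gT) (w : word L) : gT :=
  \prod_(p <- w) (if p.2 then (f p.1)^-1 else f p.1).

Definition inv_word (L : Type) (w : word L) : word L :=
  rev [seq (p.1, ~~ p.2) | p <- w].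

(* Letters of the equations u_i over D_{2n}: constants s, t, t^-1 and
   variables X_j^{+-1} (j in [1,k], indexed by 'I_k; bool = inverse). *)
Inductive ulet (k : nat) : Type :=
| U_s | U_t | U_tinv | U_X of 'I_k & bool.
Arguments U_s {k}. Arguments U_t {k}. Arguments U_tinv {k}.

Definition eval_u (gT : finGroupType) (k : nat) (s t : gT) (h : 'I_k -> gT)
  (u : seq (ulet k)) : gT :=
  \prod_(x <- u) match x with
                 | U_s => s | U_t => t | U_tinv => t^-1
                 | U_X j b => if b then (h j)^-1 else h j end.

Definition is_solution (gT : finGroupType) (k m : nat) (s t : gT)
  (u : 'I_m -> seq (ulet k)) (h : 'I_k -> gT) : Prop :=
  forall i, eval_u s t h (u i) = 1.

(* Generators of G_o: a, d and g_{i,j}, i in [0,n] ('I_n.+1), j in [1,k] ('I_k). *)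
Inductive glet (n k : nat) : Type :=
| G_a | G_d | G_g of 'I_n.+1 & 'I_k.
Arguments G_a {n k}. Arguments G_d {n k}.

Definition X_image (n k : nat) (j : 'I_k) : word (glet n k) :=
  (G_g ord0 j, false) ::
  flatten [seq [:: (G_g (inord i) j, false); (G_d, false); (G_g (inord i) j, true)]
          | i <- iota 1 n].

Definition translate_letter (n k : nat) (x : ulet k) : word (glet n k) :=
  match x with
  | U_s => [:: (G_a, false)]
  | U_t => [:: (G_d, false)]
  | U_tinv => [:: (G_d, true)]
  | U_X j false => X_image n j
  | U_X j true => inv_word (X_image n j)
  end.

Definition translate (n k : nat) (u : seq (ulet k)) : word (glet n k) :=
  flatten [seq translate_letter n x | x <- u].

Definition Go_relators (n k m : nat) (u : 'I_m -> seq (ulet k)) : seq (word (glet n k)) :=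
  [:: [:: (G_a, false); (G_a, false)];
      nseq n (G_d, false);
      [:: (G_a, false); (G_d, false); (G_a, false); (G_d, false)]]
  ++ [seq translate n (u i) | i <- enum 'I_m]
  ++ [seq [:: (G_g p.1.1 p.1.2, false); (G_g p.2.1 p.2.2, false);
              (G_g p.1.1 p.1.2, true); (G_g p.2.1 p.2.2, true)]
     | p <- enum {: ('I_n.+1 * 'I_k) * ('I_n.+1 * 'I_k) }]
  ++ [seq [:: (G_g p.1 p.2, false); (G_a, false); (G_g p.1 p.2, true); (G_a, true)]
     | p <- enum {: 'I_n.+1 * 'I_k }]
  ++ [seq [:: (G_g p.1 p.2, false); (G_g p.1 p.2, false)]
     | p <- enum {: 'I_n.+1 * 'I_k }].

(* A homomorphism from the finitely presented group G_o = <gens | relators>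
   to a group gT is (by the universal property of presentations) the same as
   an assignment f of the generators killing every relator; it is surjective
   onto a group H iff the images of the generators generate H. *)
Definition Go_hom (gT : finGroupType) (n k m : nat) (u : 'I_m -> seq (ulet k))
  (f : glet n k -> gT) : Prop :=
  forall r, List.In r (Go_relators n u) -> eval_word f r = 1.

Definition Go_gens (n k : nat) : seq (glet n k) :=
  G_a :: G_d :: [seq G_g p.1 p.2 | p <- enum {: 'I_n.+1 * 'I_k }].

Definition Go_surj (gT : finGroupType) (n k m : nat) (u : 'I_m -> seq (ulet k))
  (H : {set gT}) : Prop :=
  exists f : glet n k -> gT,
    Go_hom u f /\ (forall x, f x \in H) /\ <<[set y in map f (Go_gens n k)]>> = H.

From mathcomp Require Import all_boot all_fingroup all_solvable.
From mathcomp Require Import zify.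
Import GroupScope.
Local Open Scope group_scope.
Set Implicit Arguments. Unset Strict Implicit. Unset Printing Implicit Defensive.

(* A surjection G_o ->> D_2n maps a, d to a', d' with a'^2 = d'^n = a'd'a'd' = 1, and
   each g_ij to an involution commuting with a'.  As 4 does not divide 2n, two
   commuting involutions of D_2n are equal or one is trivial; and a' = 1 would force
   d' = 1 and make the image abelian.  So every g_ij lies in {1, a'}, hence a', d'
   generate D_2n = <d'> ><| <a'>, and (d', a') |-> (t, s) extends to an endomorphism
   which maps the images of the X_j to a solution.
   Conversely write a solution as h_j = s^e t^c.  Since 2 is invertible modulo the odd
   n, t^c = t^-p t^(n-p) for some p <= n, so g_0j = s^e, g_ij = s for 1 <= i <= p and
   g_ij = 1 for i > p send X_j to h_j and satisfy every relator. *)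

Lemma odd_order_involution (gT : finGroupType) (n : nat) (z : gT) :
  odd n -> z ^+ 2 = 1 -> z ^+ n = 1 -> z = 1.
Proof.
move=> odd_n z2 zn; apply/eqP; rewrite -order_eq1 -dvdn1.
have /eqP <- : coprime 2 n by rewrite coprime2n.
by rewrite dvdn_gcd !order_dvdn z2 zn eqxx.
Qed.

Lemma involution_invg (gT : finGroupType) (y : gT) : y ^+ 2 = 1 -> y^-1 = y.
Proof. by move=> y2; rewrite -[y^-1]mulg1 -y2 expgS expg1 mulKg. Qed.

Lemma conjg_involution (gT : finGroupType) (x y : gT) :
  y ^+ 2 = 1 -> x ^ y = y * x * y.
Proof. by move=> y2; rewrite conjgE involution_invg // mulgA. Qed.

Lemma commuting_involutions (gT : finGroupType) (a b : gT) :
  ~~ (4 %| #|[set: gT]|) -> a ^+ 2 = 1 -> b ^+ 2 = 1 -> commute a b ->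
  a != 1 -> b = 1 \/ b = a.
Proof.
move=> not4 a2 b2 cab a1.
have [->|b1] := eqVneq b 1; first by left.
have [->|ba] := eqVneq b a; first by right.
have order2 (z : gT) : z ^+ 2 = 1 -> z != 1 -> #[z] = 2.
  move=> z2 z1; apply/eqP; rewrite eqn_leq dvdn_leq ?order_dvdn ?z2 //=.
  by rewrite ltn_neqAle eq_sym order_eq1 z1 order_gt0.
have oa := order2 a a2 a1; have ob := order2 b b2 b1.
have a_notin_b : ~~ (<[a]> \subset <[b]>).
  rewrite cycle_subG; apply/negP => /cycleP[i def_a].
  by move: a1 ba; rewrite def_a -(expg_mod i b2) modn2; case: (odd i); rewrite ?eqxx.
have tiab : <[a]> :&: <[b]> = 1 by apply: prime_TIg; rewrite // -/#[a] oa.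
have := TI_cardMg tiab; rewrite -/#[a] -/#[b] oa ob.
rewrite -(cent_joinEl (cents_cycle cab)) => card_ab.
by case/negP: not4; rewrite (_ : 4 = 2 * 2)%N // -card_ab cardSg ?subsetT.
Qed.

Section DihedralRelations.

Variables (gT : finGroupType) (n : nat) (x y : gT).
Hypotheses (odd_n : odd n) (xn : x ^+ n = 1) (y2 : y ^+ 2 = 1) (xy : x ^ y = x^-1).

Lemma dihedral_norm : <[y]> \subset 'N(<[x]>).
Proof. by rewrite cycle_subG; apply/normP; rewrite -cycleJ xy cycleV. Qed.

Lemma dihedral_mulgE : <<[set y; x]>> = <[y]> * <[x]>.
Proof. by rewrite -(norm_joinEl dihedral_norm) joing_idl joing_idr. Qed.

Lemma dihedral_factor z : z \in <<[set y; x]>> -> exists e c, z = y ^+ e * x ^+ c.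
Proof.
rewrite dihedral_mulgE => /mulsgP[_ _ /cycleP[e ->] /cycleP[c ->] ->].
by exists e, c.
Qed.

Lemma dihedral_sdprod : <[x]> ><| <[y]> = <<[set y; x]>>.
Proof.
rewrite sdprodEY ?dihedral_norm //; first by rewrite joingC joing_idl joing_idr.
apply: coprime_TIg; apply: (coprime_dvdl (n := n)); first by rewrite order_dvdn xn.
by apply: (coprime_dvdr (n := 2)); rewrite ?order_dvdn ?y2 ?coprimen2.
Qed.

Lemma dihedral_orders : #|<<[set y; x]>>| = n.*2 -> #[x] = n /\ #[y] = 2.
Proof.
rewrite -(sdprod_card dihedral_sdprod) -/#[x] -/#[y] => card2n.
have n_gt0 : 0 < n by case: n odd_n.
have /dvdn_leq lex : #[x] %| n by rewrite order_dvdn xn.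
have /dvdn_leq ley : #[y] %| 2 by rewrite order_dvdn y2.
have := lex n_gt0; have := ley isT; nia.
Qed.

Lemma dihedral_nonabelian :
  1 < n -> #|<<[set y; x]>>| = n.*2 -> ~~ abelian <<[set y; x]>>.
Proof.
move=> n_gt1 card2n; apply/negP => /centsP abel.
have /commgP/conjg_fixP x_fix : commute x y.
  by apply: abel; rewrite mem_gen // !inE eqxx ?orbT.
have x2 : x ^+ 2 = 1 by rewrite expgS expg1 -{1}x_fix xy mulVg.
have [ox _] := dihedral_orders card2n.
by move: n_gt1; rewrite -ox (odd_order_involution odd_n x2 xn) order1.
Qed.

Section Morphism.

Variables (rT : finGroupType) (x' y' : rT).
Hypotheses (dvd_x : #[x'] %| #[x]) (dvd_y : #[y'] %| #[y]) (xy' : x' ^ y' = x'^-1).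

Let fx := eltm_morphism dvd_x.
Let fy := eltm_morphism dvd_y.

Lemma dihedral_morph_act : {in <[x]> & <[y]>, morph_act 'J 'J fx fy}.
Proof.
move=> _ _ /cycleP[i ->] /cycleP[e ->] /=.
rewrite -(expg_mod e y2) !eltmE modn2; case: (odd e); rewrite /= ?conjg1 ?eltmE //.
by rewrite expg1 !conjXg xy xy' expVgn (morphV fx) ?mem_cycle //= eltmE expVgn.
Qed.

Lemma dihedral_morphism :
  exists phi : {morphism <<[set y; x]>> >-> rT}, phi x = x' /\ phi y = y'.
Proof.
exists (sdprodm dihedral_sdprod dihedral_morph_act).
split; [apply: etrans (sdprodmEl _ _ (cycle_id x)) _ |
       apply: etrans (sdprodmEr _ _ (cycle_id y)) _]; exact: eltm_id.
Qed.

End Morphism.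

End DihedralRelations.

Lemma exists_half_mod n c : odd n -> exists2 p, p <= n & p + c = n - p %[mod n].
Proof.
move=> odd_n; have n_gt0 : 0 < n by case: n odd_n.
suff [p le_pn eq_p] : exists2 p, p <= n & p + c %% n = n - p %[mod n].
  by exists p; rewrite // -modnDmr.
have := ltn_pmod c n_gt0; move: (c %% n) => r r_lt_n.
have := odd_double_half r; case: (boolP (odd r)) => [odd_r | even_r] /= def_r.
  exists (n - r)./2; first lia.
  have := odd_double_half (n - r); rewrite oddB ?(ltnW r_lt_n) // odd_n odd_r /=.
  by move=> def_nr; congr (_ %% _); lia.
exists (n - r./2); first lia.
by rewrite (_ : n - r./2 + r = n + (n - (n - r./2)))%N ?modnDl //; lia.
Qed.

Lemma expg_inv_split (gT : finGroupType) n (x : gT) c :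
  odd n -> x ^+ n = 1 -> exists2 p, p <= n & x ^+ c = x^-1 ^+ p * x ^+ (n - p).
Proof.
move=> odd_n xn; have [p le_pn eq_p] := exists_half_mod c odd_n.
exists p; rewrite // -[x ^+ (n - p)](expg_mod _ xn) -eq_p (expg_mod _ xn).
by rewrite expgD expVgn mulKg.
Qed.

Lemma prodg_nat_ifle (gT : finGroupType) (a b : gT) p N : p <= N ->
  \prod_(1 <= i < N.+1) (if i <= p then a else b) = a ^+ p * b ^+ (N - p).
Proof.
move=> le_pN; rewrite (big_cat_nat _ (n := p.+1)) ?ltnS //.
rewrite (@eq_big_nat _ _ _ 1 p.+1 _ (fun=> a)) => [|i /andP[_]]; last by rewrite ltnS => ->.
rewrite (@eq_big_nat _ _ _ p.+1 N.+1 _ (fun=> b)) => [|i /andP[lt_pi _]]; last first.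
  by rewrite leqNgt lt_pi.
by rewrite !prodg_const_nat subSS subn0.
Qed.

Section EvalWord.

Variables (L : Type) (gT : finGroupType) (f : L -> gT).

Lemma eval_word_nil : eval_word f [::] = 1.
Proof. by rewrite /eval_word big_nil. Qed.

Lemma eval_word_cons p w :
  eval_word f (p :: w) = (if p.2 then (f p.1)^-1 else f p.1) * eval_word f w.
Proof. by rewrite /eval_word big_cons. Qed.

Lemma eval_word_cat w1 w2 : eval_word f (w1 ++ w2) = eval_word f w1 * eval_word f w2.
Proof. by rewrite /eval_word big_cat. Qed.

Lemma eval_word_inv w : eval_word f (inv_word w) = (eval_word f w)^-1.
Proof.
elim: w => [|[l []] w IH]; first by rewrite /inv_word eval_word_nil invg1.
all: rewrite /inv_word map_cons rev_cons -cats1 eval_word_cat -/(inv_word w) IH.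
all: by rewrite !eval_word_cons eval_word_nil mulg1 invMg ?invgK.
Qed.

Lemma eval_word_nseq l e : eval_word f (nseq e (l, false)) = f l ^+ e.
Proof.
by elim: e => [|e IH]; rewrite ?eval_word_nil // eval_word_cons IH expgS.
Qed.

Lemma eval_comm_word l l' :
  eval_word f [:: (l, false); (l', false); (l, true); (l', true)] = 1 <->
  commute (f l) (f l').
Proof.
rewrite !eval_word_cons eval_word_nil /= mulg1 !mulgA.
split=> [| c]; last by rewrite c mulgK mulgV.
by move=> /(congr1 (fun z => z * (f l' * f l))); rewrite mul1g !mulgA !mulgKV.
Qed.

End EvalWord.

Lemma eval_translate (gT : finGroupType) n k (f : glet n k -> gT) u :
  eval_word f (translate n u) =
  eval_u (f G_a) (f G_d) (fun j => eval_word f (X_image n j)) u.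
Proof.
rewrite /translate /eval_word big_flatten big_map /eval_u.
apply: eq_bigr => -[| | |j []] _ /=; rewrite -/(eval_word f _) ?eval_word_inv //.
all: by rewrite eval_word_cons eval_word_nil mulg1.
Qed.

Lemma eval_X_image (gT : finGroupType) n k (f : glet n k -> gT) j :
  eval_word f (X_image n j) =
  f (G_g ord0 j) *
  \prod_(1 <= i < n.+1) (f (G_g (inord i) j) * f G_d * (f (G_g (inord i) j))^-1).
Proof.
rewrite /X_image eval_word_cons /eval_word big_flatten big_map /index_iota subSS subn0.
by congr (_ * _); apply: eq_bigr => i _; rewrite !big_cons big_nil /= mulg1 mulgA.
Qed.

Lemma eq_eval_u (gT : finGroupType) k (s t : gT) (h1 h2 : 'I_k -> gT) u :
  h1 =1 h2 -> eval_u s t h1 u = eval_u s t h2 u.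
Proof. by move=> eq_h; apply: eq_bigr => -[| | |j []] _; rewrite ?eq_h. Qed.

Lemma morph_eval_u (aT rT : finGroupType) (D : {group aT})
    (phi : {morphism D >-> rT}) k (s t : aT) (h : 'I_k -> aT) u :
  s \in D -> t \in D -> (forall j, h j \in D) ->
  phi (eval_u s t h u) = eval_u (phi s) (phi t) (fun j => phi (h j)) u.
Proof.
move=> Ds Dt Dh; rewrite /eval_u morph_prod => [|[| | |j []] _]; rewrite ?groupV //.
by apply: eq_bigr => -[| | |j []] _; rewrite ?morphV.
Qed.

Lemma In_mem (T : eqType) (x : T) s : x \in s -> List.In x s.
Proof. by elim: s => //= y s IH; rewrite in_cons => /orP[/eqP->|/IH]; [left|right]. Qed.

Lemma In_cat (T : Type) (x : T) s1 s2 :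
  List.In x (s1 ++ s2) <-> List.In x s1 \/ List.In x s2.
Proof. by elim: s1 => [|y s1 IH] /=; [tauto | rewrite IH; tauto]. Qed.

Lemma In_map (T U : Type) (g : T -> U) s y :
  List.In y (map g s) <-> exists2 x, List.In x s & y = g x.
Proof.
elim: s => [|x s IH] /=; first by split=> // -[].
rewrite IH; split=> [[<-|[z z_s ->]]|[z [<-|z_s] ->]].
- by exists x; [left|].
- by exists z; [right|].
- by left.
- by right; exists z.
Qed.

Lemma In_enum (T : finType) (x : T) : List.In x (enum T).
Proof. by apply: In_mem; rewrite mem_enum. Qed.

Section Presentation.

Variables (gT : finGroupType) (n k m : nat) (u : 'I_m -> seq (ulet k)).
Implicit Type f : glet n k -> gT.

Lemma Go_homP f :
  Go_hom u f <->
  [/\ f G_a ^+ 2 = 1, f G_d ^+ n = 1, f G_a * f G_d * f G_a * f G_d = 1,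
      forall i, eval_word f (translate n (u i)) = 1 &
      forall i j, [/\ f (G_g i j) ^+ 2 = 1, commute (f (G_g i j)) (f G_a) &
                     forall i' j', commute (f (G_g i j)) (f (G_g i' j'))]].
Proof.
have eval4 l1 l2 l3 l4 :
    eval_word f [:: (l1, false); (l2, false); (l3, false); (l4, false)] =
    f l1 * f l2 * f l3 * f l4.
  by rewrite !eval_word_cons eval_word_nil /= mulg1 !mulgA.
have eval2 l : eval_word f [:: (l, false); (l, false)] = f l ^+ 2.
  by rewrite !eval_word_cons eval_word_nil /= mulg1 expgS expg1.
rewrite /Go_hom /Go_relators; split=> [hom_f | [a2 dn ada w g] r].
  split=> [||||i j].
  - by rewrite -eval2; apply: hom_f; left.
  - by rewrite -eval_word_nseq; apply: hom_f; right; left.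
  - by rewrite -eval4; apply: hom_f; right; right; left.
  - move=> i; apply: hom_f; rewrite In_cat; right; rewrite In_cat; left.
    by apply/In_map; exists i; first exact: In_enum.
  split=> [||i' j'].
  - rewrite -eval2; apply: hom_f; rewrite !In_cat; do 4 right.
    by apply/In_map; exists (i, j); first exact: In_enum.
  - apply/eval_comm_word/hom_f; rewrite !In_cat; do 3 right; left.
    by apply/In_map; exists (i, j); first exact: In_enum.
  - apply/eval_comm_word/hom_f; rewrite !In_cat; do 2 right; left.
    by apply/In_map; exists ((i, j), (i', j')); first exact: In_enum.
rewrite !In_cat => -[[<-|[<-|[<-|[]]]] | [/In_map[i _ ->] | rels_g]].
- by rewrite eval2.
- by rewrite eval_word_nseq.
- by rewrite eval4.
- exact: w.
case: rels_g =>
  [/In_map[[[i j] [i' j']] _ ->] | [/In_map[[i j] _ ->] | /In_map[[i j] _ ->]]].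
- by apply/eval_comm_word; case: (g i j).
- by apply/eval_comm_word; case: (g i j).
- by rewrite eval2; case: (g i j).
Qed.

End Presentation.

Lemma Go_gensP (gT : finGroupType) n k (f : glet n k -> gT) y :
  y \in [set z in map f (Go_gens n k)] ->
  [\/ y = f G_a, y = f G_d | exists i j, y = f (G_g i j)].
Proof.
rewrite inE /Go_gens /= -map_comp !in_cons.
case/or3P=> [/eqP-> | /eqP-> | /mapP[[i j] _ ->]].
- exact: Or31.
- exact: Or32.
- by apply: Or33; exists i, j.
Qed.

Section SurjectionToSolution.

Variables (gT : finGroupType) (n k m : nat) (u : 'I_m -> seq (ulet k)).
Variables (s t : gT) (f : glet n k -> gT).
Hypotheses (n_gt1 : 1 < n) (odd_n : odd n) (card_gT : #|[set: gT]| = n.*2).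
Hypotheses (s2 : s ^+ 2 = 1) (tn : t ^+ n = 1) (ts : t ^ s = t^-1).
Hypothesis gen_st : <<[set s; t]>> = [set: gT].
Hypotheses (hom_f : Go_hom u f) (gen_f : <<[set z in map f (Go_gens n k)]>> = [set: gT]).

Let rels := iffLR (Go_homP u f) hom_f.

Lemma Go_image_a_neq1 : f G_a != 1.
Proof.
have := dihedral_nonabelian odd_n tn s2 ts n_gt1; rewrite gen_st => /(_ card_gT).
apply: contra => /eqP a1; have [_ dn ada _ g] := rels.
(* With a = 1 also d = 1, and the remaining generators g_ij commute pairwise. *)
have d1 : f G_d = 1.
  apply: (odd_order_involution odd_n _ dn).
  by move: ada; rewrite a1 !mulg1 mul1g expgS expg1.
rewrite -gen_f abelian_gen; apply/centsP => y /Go_gensP gy z /Go_gensP gz.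
case: gy gz => [->|->|[i [j ->]]] [->|->|[i' [j' ->]]]; rewrite ?a1 ?d1;
  try exact: commute1; try exact: commute_sym (commute1 _).
by case: (g i j) => _ _; apply.
Qed.

Lemma Go_image_gen : <<[set f G_a; f G_d]>> = [set: gT].
Proof.
have not4 : ~~ (4 %| #|[set: gT]|).
  by rewrite card_gT -mul2n (_ : 4 = 2 * 2)%N // dvdn_pmul2l // dvdn2 odd_n.
have [a2 _ _ _ g] := rels.
apply/eqP; rewrite eqEsubset subsetT /= -{1}gen_f gen_subG.
apply/subsetP => y /Go_gensP.
have a_in : f G_a \in <<[set f G_a; f G_d]>> by rewrite mem_gen // !inE eqxx.
case=> [->|->|[i [j ->]]] //; first by rewrite mem_gen // !inE eqxx orbT.
have [g2 ga _] := g i j.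
by have [->|->] := commuting_involutions not4 a2 g2 (commute_sym ga) Go_image_a_neq1.
Qed.

Lemma Go_hom_solution : exists h, is_solution s t u h.
Proof.
have [a2 dn ada w _] := rels.
have da : f G_d ^ f G_a = (f G_d)^-1.
  by rewrite conjg_involution //; apply/eqP; rewrite eq_mulgV1 invgK ada.
have [od oa] : #[f G_d] = n /\ #[f G_a] = 2.
  by apply: (dihedral_orders odd_n dn a2 da); rewrite Go_image_gen.
have dvd_t : #[t] %| #[f G_d] by rewrite od order_dvdn tn.
have dvd_s : #[s] %| #[f G_a] by rewrite oa order_dvdn s2.
have [phi [phi_d phi_a]] := dihedral_morphism odd_n dn a2 da dvd_t dvd_s ts.
have in_dom z : z \in <<[set f G_a; f G_d]>> by rewrite Go_image_gen inE.
exists (fun j => phi (eval_word f (X_image n j))) => i.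
by rewrite -phi_a -phi_d -morph_eval_u // -eval_translate w morph1.
Qed.

End SurjectionToSolution.

Section SolutionToSurjection.

Variables (gT : finGroupType) (n k m : nat) (u : 'I_m -> seq (ulet k)) (s t : gT).
Hypotheses (odd_n : odd n) (s2 : s ^+ 2 = 1) (tn : t ^+ n = 1) (ts : t ^ s = t^-1).
Hypothesis gen_st : <<[set s; t]>> = [set: gT].

Lemma dihedral_balanced_factor z :
  exists ep : nat * nat, ep.2 <= n /\ z = s ^+ ep.1 * (t^-1 ^+ ep.2 * t ^+ (n - ep.2)).
Proof.
have [e [c ->]] : exists e c, z = s ^+ e * t ^+ c.
  by apply: (dihedral_factor ts); rewrite gen_st inE.
have [p le_pn ->] := expg_inv_split c odd_n tn.
by exists (e, p).
Qed.

Section Witness.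

Variables (e p : 'I_k -> nat).

Definition Go_witness (l : glet n k) : gT :=
  match l with
  | G_a => s
  | G_d => t
  | G_g i j => s ^+ (if i == ord0 then e j else i <= p j)
  end.

Lemma eval_X_image_witness j : p j <= n ->
  eval_word Go_witness (X_image n j) = s ^+ e j * (t^-1 ^+ p j * t ^+ (n - p j)).
Proof.
move=> le_pn; rewrite eval_X_image /=; congr (_ * _).
rewrite -prodg_nat_ifle //; apply: eq_big_nat => i /andP[i_gt0 i_le_n].
rewrite -val_eqE /= inordK // eqn0Ngt i_gt0 /=.
case: (i <= p j); last by rewrite invg1 mulg1 mul1g.
by rewrite expg1 (involution_invg s2) -conjg_involution.
Qed.

Lemma Go_witness_gen : <<[set z in map Go_witness (Go_gens n k)]>> = [set: gT].
Proof.
apply/eqP; rewrite eqEsubset subsetT -{1}gen_st genS //.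
by apply/subsetP => z; rewrite !inE => /orP[] /eqP->; rewrite /= eqxx ?orbT.
Qed.

End Witness.

Lemma solution_Go_surj h : is_solution s t u h -> Go_surj n u [set: gT].
Proof.
move=> sol_h.
have [ep def_ep] := fin_all_exists (fun j => dihedral_balanced_factor (h j)).
pose f := Go_witness (fun j => (ep j).1) (fun j => (ep j).2).
have X_image_f j : eval_word f (X_image n j) = h j.
  by have [le_pn ->] := def_ep j; rewrite eval_X_image_witness.
exists f; split; [apply/Go_homP | split=> [l|]; [exact: in_setT | exact: Go_witness_gen]].
split=> [||| i | i j] /=.
- exact: s2.
- exact: tn.
- by rewrite -(conjg_involution t s2) ts mulVg.
- by rewrite eval_translate (eq_eval_u _ _ _ X_image_f) sol_h.
split=> [||i' j'].
- by rewrite -expgM mulnC expgM s2 expg1n.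
- exact/commute_sym/commuteX/commute_refl.
- exact/commuteX2/commute_refl.
Qed.

End SolutionToSurjection.

Theorem lemma7p10 (n k m : nat) (s t : 'D_(n.*2)) (u : 'I_m -> seq (ulet k)) :
  1 < n -> odd n ->
  s ^+ 2 = 1 -> t ^+ n = 1 -> s * t * s = t^-1 ->
  <<[set s; t]>> = [set: 'D_(n.*2)] ->
  Go_surj n u [set: 'D_(n.*2)] <->
  exists h : 'I_k -> 'D_(n.*2), is_solution s t u h.
Proof.
move=> n_gt1 odd_n s2 tn sts gen_st.
have ts : t ^ s = t^-1 by rewrite conjg_involution.
split=> [[f [hom_f [_ gen_f]]] | [h sol_h]].
- have card_D : #|[set: 'D_(n.*2)]| = n.*2 := card_dihedral n_gt1.
  exact: (Go_hom_solution n_gt1 odd_n card_D s2 tn ts gen_st hom_f gen_f).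
- exact: (solution_Go_surj odd_n s2 tn ts gen_st sol_h).
Qed.
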